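(* Let $\mathcal{A}$ be a parameter-preserving reduction algorithm (polynomial-time) for Max $k$-Weight SAT that, on input $(\Phi, k)$, only deletes a subset of the variables together with all their literals, producing $(\Phi', k)$. If $\mathrm{OPT}_{\Phi', k} \ge (1 - \delta) \cdot \mathrm{OPT}_{\Phi, k}$ for some $\delta \in (0, 1)$, then $(\mathcal{A}, \mathrm{Iden})$ is a $(1 - \delta)$-APPA, where $\mathrm{Iden}$ is the solution-lifting algorithm that outputs its input solution unchanged.
   Context: Max $k$-Weight SAT: input is a CNF formula $\Phi = (\mathcal{V}, \mathcal{C})$ with variable set $\mathcal{V}$ and a multiset $\mathcal{C}$ of clauses, plus a positive integer $k$. A solution is $Y \subseteq \mathcal{V}$ with $|Y| \le k$ (variables set to true); $\mathrm{val}_\Phi(Y)$ is the number of clauses (with multiplicity) satisfied by $Y$; $\mathrm{OPT}_{\Phi,k} = \max_{|Y|\le k}\mathrm{val}_\Phi(Y)$. A solution is $\beta$-approximate if its value is at least $\beta\cdot\mathrm{OPT}$. An $\alpha$-APPA is a pair of polynomial-time algorithms $(\mathcal{A},\mathcal{B})$ where $\mathcal{A}$ maps an instance $(I,k)$ to an instance $(I',k')$ and $\mathcal{B}$ maps any $\beta$-approximate solution of $(I',k')$ to an $\alpha\beta$-approximate solution of $(I,k)$. Parameter-preserving means $k'=k$. *)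

From HB Require Import structures.
From mathcomp Require Import all_boot all_order all_algebra.
Set Implicit Arguments. Unset Strict Implicit. Unset Printing Implicit Defensive.
Import Order.TTheory GRing.Theory Num.Theory.

Section MaxKWeightSAT.
Variable T : finType.  (* universe from which variable names are drawn *)

(* A literal is a variable together with a polarity (true = positive). *)
Definition literal := (T * bool)%type.
Definition clause := seq literal.

Record cnf := CNF { vars : {set T}; clauses : seq clause }.

Definition cnf_wf (F : cnf) : bool :=
  all (fun C : clause => all (fun l : literal => l.1 \in vars F) C) (clauses F).

Definition lit_sat (Y : {set T}) (l : literal) : bool :=
  if l.2 then l.1 \in Y else l.1 \notin Y.
Definition clause_sat (Y : {set T}) (C : clause) : bool := has (lit_sat Y) C.

Definition val (F : cnf) (Y : {set T}) : nat := count (clause_sat Y) (clauses F).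

Definition feasible (F : cnf) (k : nat) (Y : {set T}) : bool :=
  (Y \subset vars F) && (#|Y| <= k).

Definition OPT (F : cnf) (k : nat) : nat :=
  \max_(Y : {set T} | feasible F k Y) val F Y.

Definition delete_vars (F : cnf) (D : {set T}) : cnf :=
  CNF (vars F :\: D) [seq [seq l <- C | l.1 \notin D] | C <- clauses F].

Variable R : realFieldType.

Definition approx (F : cnf) (k : nat) (beta : R) (Y : {set T}) : Prop :=
  feasible F k Y /\ (beta * (OPT F k)%:R <= (val F Y)%:R)%R.

Definition is_APPA (A : cnf -> nat -> cnf * nat)
    (B : cnf -> nat -> {set T} -> {set T}) (alpha : R) : Prop :=
  forall (F : cnf) (k : nat), cnf_wf F -> (0 < k)%N ->
    cnf_wf (A F k).1 /\
    forall (beta : R) (Y' : {set T}), (0 < beta <= 1)%R ->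
      approx (A F k).1 (A F k).2 beta Y' ->
      approx F k (alpha * beta) (B F k Y').

Definition Iden (F : cnf) (k : nat) (Y : {set T}) : {set T} := Y.

End MaxKWeightSAT.

From Pilot Require Import Defs.
From HB Require Import structures.
From mathcomp Require Import all_boot all_order all_algebra.
Import Order.TTheory GRing.Theory Num.Theory.

(* Deleting variables only removes literals, so every clause satisfied by Y
   in the reduced instance is satisfied by Y in the original one, and every
   solution of the reduced instance is a solution of the original.  Hence a
   beta-approximate solution Y of (Phi', k) satisfies
   val_Phi(Y) >= val_Phi'(Y) >= beta OPT_Phi' >= beta (1 - delta) OPT_Phi. *)

Section DeleteVars.
Variables (T : finType) (F : cnf T) (D : {set T}).

Lemma clause_sat_filter (Y : {set T}) (p : pred (literal T)) (C : clause T) :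
  clause_sat Y [seq l <- C | p l] -> clause_sat Y C.
Proof.
by case/hasP=> l; rewrite mem_filter => /andP[_ lC] satl; apply/hasP; exists l.
Qed.

Lemma val_delete_vars_le (Y : {set T}) :
  (Defs.val (delete_vars F D) Y <= Defs.val F Y)%N.
Proof.
by rewrite /Defs.val count_map; apply: sub_count => C; apply: clause_sat_filter.
Qed.

Lemma cnf_wf_delete_vars : cnf_wf F -> cnf_wf (delete_vars F D).
Proof.
rewrite /cnf_wf /= all_map => /allP wfF; apply/allP => C /wfF /allP wfC /=.
rewrite all_filter; apply/allP => l lC; apply/implyP => lD.
by rewrite in_setD lD wfC.
Qed.

Lemma feasible_delete_vars (k : nat) (Y : {set T}) :
  feasible (delete_vars F D) k Y -> feasible F k Y.
Proof.
case/andP=> sY cardY.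
by rewrite /feasible cardY andbT (subset_trans sY) ?subsetDl.
Qed.

Lemma approx_delete_vars (R : realFieldType) (k : nat) (alpha beta : R)
    (Y : {set T}) :
  (0 <= beta)%R ->
  (alpha * (OPT F k)%:R <= (OPT (delete_vars F D) k)%:R)%R ->
  approx (delete_vars F D) k beta Y -> approx F k (alpha * beta) Y.
Proof.
move=> beta_ge0 OPT_ge [feasY valY]; split; first exact: feasible_delete_vars.
rewrite mulrAC; apply: le_trans (ler_wpM2r beta_ge0 OPT_ge) _.
by rewrite mulrC; apply: le_trans valY _; rewrite ler_nat val_delete_vars_le.
Qed.

End DeleteVars.

Theorem lemma2p4 (T : finType) (R : realFieldType)
    (A : cnf T -> nat -> cnf T) (delta : R) :
  (0 < delta < 1)%R ->
  (* A only deletes a subset of the variables together with their literals *)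
  (forall (F : cnf T) (k : nat), cnf_wf F ->
     exists D : {set T}, D \subset vars F /\ A F k = delete_vars F D) ->
  (* OPT_{Phi',k} >= (1 - delta) OPT_{Phi,k} *)
  (forall (F : cnf T) (k : nat), cnf_wf F -> (0 < k)%N ->
     ((1 - delta) * (OPT F k)%:R <= (OPT (A F k) k)%:R)%R) ->
  (* (A, Iden) is a parameter-preserving (1 - delta)-APPA *)
  is_APPA (fun F k => (A F k, k)) (@Iden T) (1 - delta)%R.
Proof.
move=> _ A_deletes A_OPT F k wfF k_gt0 /=.
have OPT_ge := A_OPT F k wfF k_gt0.
have [D [_ AF]] := A_deletes F k wfF; rewrite AF in OPT_ge *.
split; first exact: cnf_wf_delete_vars.
by move=> beta Y /andP[/ltW beta_ge0 _]; apply: approx_delete_vars.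
Qed.
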